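(* Let $m\ge1$, $G(x)=-x^3$, and let $F(x)=|x^h|^2$. Let $(\widetilde\varrho_\varepsilon)_{0<\varepsilon\le1}$ be positive functions on $\Omega=\mathbb R^2\times\,]0,1[$ solving $\Pi(\widetilde\varrho_\varepsilon)=\varepsilon^{2(m-1)}F+\varepsilon^mG$ on $\Omega$. Then for every $l>0$ there exists a constant $C(l)>1$ such that for all $\varepsilon\in\,]0,1]$ one has $\widetilde\varrho_\varepsilon\le C(l)$ on $\overline{\mathbb B}_l$, where $\mathbb B_l:=\{x\in\Omega:|x^h|<l\}$. If instead $F\equiv0$ (and $\widetilde\varrho_\varepsilon$ solve $\Pi(\widetilde\varrho_\varepsilon)=\varepsilon^mG$), then there exists a constant $C>1$ such that $|\widetilde\varrho_\varepsilon(x)|\le C$ for all $\varepsilon\in\,]0,1]$ and all $x\in\Omega$.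
   Context: Points of $\Omega$ are $x=(x^h,x^3)$ with $x^h\in\mathbb R^2$. The pressure is $p(\varrho,\vartheta)=\vartheta^{5/2}P(\varrho/\vartheta^{3/2})+\frac a3\vartheta^4$ with $a>0$, where $P\in C^1([0,\infty))\cap C^2(]0,\infty[)$, $P(0)=0$, $P'(Z)>0$ for all $Z\ge0$, $0<\big(\frac53P(Z)-P'(Z)Z\big)/Z<c$ for all $Z>0$, and $\lim_{Z\to+\infty}P(Z)/Z^{5/3}=P_\infty>0$. Fix a constant $\overline\vartheta>0$ and set $\Pi(\varrho):=\int_1^\varrho\frac{\partial_\varrho p(z,\overline\vartheta)}{z}dz$ for $\varrho>0$. *)

From Stdlib Require Import Reals.
From Coquelicot Require Import Coquelicot.
Open Scope R_scope.

Definition pressure (P : R -> R) (a rho theta : R) : R :=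
  Rpower theta (5/2) * P (rho / Rpower theta (3/2)) + a / 3 * theta ^ 4.

Definition Pi (P : R -> R) (a thetabar rho : R) : R :=
  RInt (fun z => Derive (fun r => pressure P a r thetabar) z / z) 1 rho.

Definition P_hyps (P dP : R -> R) : Prop :=
  (* P in C^1([0,oo)) *)
  (forall Z, 0 < Z -> is_derive P Z (dP Z)) /\
  filterlim (fun h => (P h - P 0) / h) (at_right 0) (locally (dP 0)) /\
  (forall Z, 0 < Z -> continuous dP Z) /\
  filterlim dP (at_right 0) (locally (dP 0)) /\
  (* P in C^2(]0,oo[) *)
  (forall Z, 0 < Z -> ex_derive dP Z) /\
  (forall Z, 0 < Z -> continuous (Derive dP) Z) /\
  P 0 = 0 /\
  (forall Z, 0 <= Z -> 0 < dP Z) /\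
  (exists c, forall Z, 0 < Z ->
      0 < (5/3 * P Z - dP Z * Z) / Z < c) /\
  (exists Pinf, 0 < Pinf /\
      is_lim (fun Z => P Z / Rpower Z (5/3)) p_infty Pinf).

Definition in_Omega (x1 x2 x3 : R) : Prop := 0 < x3 < 1.

From Stdlib Require Import Reals Lra.
From Coquelicot Require Import Coquelicot.
Open Scope R_scope.

(* Differentiating the pressure gives Pi'(rho) = thetabar P'(rho/s) / rho with
   s = thetabar^(3/2).  Bounding 1/z below by 1/C on [1, C] yields
   Pi(C) >= thetabar (P(C/s) - P(1/s)) / (C/s), which tends to +oo because P
   grows like Z^(5/3); so Pi is coercive.  On the other hand the right-hand
   sides eps^(2(m-1)) |x^h|^2 - eps^m x^3 are bounded above by l^2 on B_l
   (by 0 when F = 0), uniformly in eps in ]0,1], so all the densities lie in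
   one sublevel set of Pi, which is bounded. *)

Lemma Rpower_le_1 (x e : R) : 0 < x <= 1 -> 0 <= e -> Rpower x e <= 1.
Proof.
  intros Hx He.
  apply Rle_trans with (Rpower 1 e); [exact (Rle_Rpower_l x 1 e He Hx) |].
  unfold Rpower; rewrite ln_1, Rmult_0_r, exp_0; apply Rle_refl.
Qed.

Lemma Rbar_mult_pos_p_infty (x : R) : 0 < x -> Rbar_mult x p_infty = p_infty.
Proof.
  intros Hx; rewrite Rbar_mult_comm.
  exact (is_Rbar_mult_unique _ _ _ (is_Rbar_mult_p_infty_pos x Hx)).
Qed.

Lemma is_lim_Rpower_p_infty (e : R) : 0 < e -> is_lim (fun x => Rpower x e) p_infty p_infty.
Proof.
  intros He.
  apply (is_lim_comp exp (fun x => e * ln x) p_infty p_infty p_infty).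
  - exact is_lim_exp_p.
  - rewrite <- (Rbar_mult_pos_p_infty e He) at 2.
    exact (is_lim_scal_l _ e _ _ is_lim_ln_p).
  - exists 0; intros; discriminate.
Qed.

Lemma is_lim_div_p_infty (f : R -> R) (e l : R) :
  1 < e -> 0 < l -> is_lim (fun x => f x / Rpower x e) p_infty l ->
  is_lim (fun x => f x / x) p_infty p_infty.
Proof.
  intros He Hl Hf.
  apply is_lim_ext_loc with (fun x => f x / Rpower x e * Rpower x (e - 1)).
  - exists 0; intros x Hx.
    replace (Rpower x e) with (x * Rpower x (e - 1)).
    + field; split; [lra | exact (Rgt_not_eq _ _ (exp_pos _))].
    + rewrite <- (Rpower_1 x) at 1 by exact Hx.
      rewrite <- Rpower_plus; f_equal; ring.
  - rewrite <- (Rbar_mult_pos_p_infty l Hl) at 2.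
    apply (is_lim_mult _ _ _ _ _ Hf (is_lim_Rpower_p_infty (e - 1) ltac:(lra))).
    simpl; lra.
Qed.

Lemma is_lim_sub_div_p_infty (f : R -> R) (c : R) :
  is_lim (fun x => f x / x) p_infty p_infty ->
  is_lim (fun x => (f x - c) / x) p_infty p_infty.
Proof.
  intros Hf.
  apply is_lim_ext with (fun x => f x / x + (- c) * / x); [intros x; unfold Rdiv; ring |].
  apply (is_lim_plus _ _ _ _ 0 _ Hf).
  - replace (Finite 0) with (Rbar_mult (- c) 0) by (simpl; f_equal; ring).
    apply is_lim_scal_l.
    exact (is_lim_inv _ _ _ (is_lim_id p_infty) ltac:(discriminate)).
  - reflexivity.
Qed.

Lemma is_lim_p_infty_sublevel (f : R -> R) :
  is_lim f p_infty p_infty ->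
  forall B, exists C, 1 < C /\ forall x, f x <= B -> x <= C.
Proof.
  intros Hf B.
  destruct (proj2 (is_lim_spec f p_infty p_infty) Hf B) as [N HN].
  exists (Rmax 1 N + 1); split; [pose proof (Rmax_l 1 N); lra |].
  intros x Hx. apply Rnot_lt_le; intros Hlt.
  pose proof (Rmax_r 1 N). pose proof (HN x ltac:(lra)). lra.
Qed.

Lemma source_le_sqr_radius (eps m l x1 x2 x3 : R) :
  0 < eps <= 1 -> 1 <= m -> 0 < x3 -> sqrt (x1 ^ 2 + x2 ^ 2) <= l ->
  Rpower eps (2 * (m - 1)) * (x1 ^ 2 + x2 ^ 2) + Rpower eps m * (- x3) <= l ^ 2.
Proof.
  intros Heps Hm Hx3 Hxl.
  assert (Hxh : x1 ^ 2 + x2 ^ 2 <= l ^ 2).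
  { rewrite <- (sqrt_sqrt (x1 ^ 2 + x2 ^ 2)) by nra.
    pose proof (sqrt_pos (x1 ^ 2 + x2 ^ 2)); nra. }
  pose proof (Rpower_le_1 eps (2 * (m - 1)) Heps ltac:(lra)).
  pose proof (exp_pos (2 * (m - 1) * ln eps)).
  pose proof (exp_pos (m * ln eps)).
  unfold Rpower in *; nra.
Qed.

Section Pi_growth.

Variables (P dP : R -> R) (a th : R).
Hypothesis th_gt0 : 0 < th.
Hypothesis P_derive : forall Z, 0 < Z -> is_derive P Z (dP Z).
Hypothesis dP_cont : forall Z, 0 < Z -> continuous dP Z.
Hypothesis dP_ge0 : forall Z, 0 < Z -> 0 <= dP Z.

Local Notation s := (Rpower th (3/2)).

Let s_gt0 : 0 < s := exp_pos _.

Lemma is_derive_P_div_s z : 0 < z -> is_derive (fun r => P (r / s)) z (dP (z / s) / s).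
Proof.
  intros Hz.
  replace (dP (z / s) / s) with (scal (/ s) (dP (z / s))) by exact (Rmult_comm _ _).
  apply (is_derive_comp P (fun r => r / s)).
  - apply P_derive, Rdiv_lt_0_compat; assumption.
  - auto_derive; [lra | field; lra].
Qed.

Lemma continuous_dP_div_s_div (g : R -> R) z :
  0 < z -> continuous g z -> g z <> 0 ->
  continuous (fun r => th * dP (r / s) / g r) z.
Proof.
  intros Hz Hg Hg0.
  apply (continuous_mult (fun r => th * dP (r / s)) (fun r => / g r)).
  - apply (continuous_mult (fun _ => th) (fun r => dP (r / s))); [apply continuous_const |].
    apply (continuous_comp (fun r => r / s) dP).
    + apply (continuous_mult (fun r => r) (fun _ => / s)); [apply continuous_id | apply continuous_const].
    + apply dP_cont, Rdiv_lt_0_compat; assumption.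
  - apply (continuous_comp g Rinv); [exact Hg | apply continuous_Rinv, Hg0].
Qed.

Lemma Derive_pressure z : 0 < z -> Derive (fun r => pressure P a r th) z = th * dP (z / s).
Proof.
  intros Hz. apply is_derive_unique. unfold pressure.
  assert (Hk : Rpower th (5/2) = th * s).
  { rewrite <- (Rpower_1 th) at 2 by exact th_gt0.
    rewrite <- Rpower_plus; f_equal; field. }
  replace (th * dP (z / s)) with (Rpower th (5/2) * (dP (z / s) / s) + 0)
    by (rewrite Hk; field; lra).
  apply (is_derive_plus (fun r => Rpower th (5/2) * P (r / s)) (fun _ => a / 3 * th ^ 4)).
  - apply (is_derive_scal (fun r => P (r / s))), is_derive_P_div_s, Hz.
  - auto_derive; [exact I | ring].
Qed.

Lemma Pi_ge_secant (C : R) : 1 <= C ->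
  th * ((P (C / s) - P (1 / s)) / (C / s)) <= Pi P a th C.
Proof.
  intros HC.
  assert (Hpos : forall z, Rmin 1 C <= z <= Rmax 1 C -> 0 < z)
    by (intros z; rewrite Rmin_left, Rmax_right by lra; lra).
  assert (HPi : Pi P a th C = RInt (fun z => th * dP (z / s) / z) 1 C).
  { unfold Pi; apply RInt_ext; intros z Hz.
    rewrite Derive_pressure; [reflexivity | apply Hpos; lra]. }
  set (F := fun z => th * s / C * P (z / s)).
  assert (Hsecant : is_RInt (fun z => th * dP (z / s) / C) 1 C (minus (F C) (F 1))).
  { apply (is_RInt_derive F); intros z Hz.
    - replace (th * dP (z / s) / C) with (th * s / C * (dP (z / s) / s)) by (field; lra).
      apply (is_derive_scal (fun r => P (r / s))), is_derive_P_div_s, Hpos, Hz.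
    - apply (continuous_dP_div_s_div (fun _ => C)); [apply Hpos, Hz | apply continuous_const | lra]. }
  rewrite HPi.
  apply Rle_trans with (RInt (fun z => th * dP (z / s) / C) 1 C).
  - right. rewrite (is_RInt_unique _ _ _ _ Hsecant).
    unfold F, minus, plus, opp; simpl. field; lra.
  - apply RInt_le; [lra | exists (minus (F C) (F 1)); exact Hsecant | |].
    + apply (@ex_RInt_continuous R_CompleteNormedModule); intros z Hz.
      apply (continuous_dP_div_s_div (fun r => r)); [| apply continuous_id |]; specialize (Hpos z Hz); lra.
    + intros z Hz. unfold Rdiv. apply Rmult_le_compat_l.
      * apply Rmult_le_pos; [lra | apply dP_ge0, Rdiv_lt_0_compat; lra].
      * apply Rinv_le_contravar; lra.
Qed.

Hypothesis P_superlinear : is_lim (fun Z => P Z / Z) p_infty p_infty.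

Lemma is_lim_Pi_p_infty : is_lim (Pi P a th) p_infty p_infty.
Proof.
  apply is_lim_le_p_loc with (fun C => th * ((P (C / s) - P (1 / s)) / (C / s))).
  - exists 1; intros C HC; apply Pi_ge_secant; lra.
  - rewrite <- (Rbar_mult_pos_p_infty th th_gt0) at 2.
    apply is_lim_scal_l.
    apply (is_lim_comp (fun Z => (P Z - P (1 / s)) / Z) (fun C => C / s) p_infty p_infty p_infty).
    + apply is_lim_sub_div_p_infty, P_superlinear.
    + assert (Hs := is_lim_scal_r _ (/ s) _ _ (is_lim_id p_infty)).
      rewrite Rbar_mult_comm, Rbar_mult_pos_p_infty in Hs by (apply Rinv_0_lt_compat, s_gt0).
      exact Hs.
    + exists 0; intros; discriminate.
Qed.

End Pi_growth.

Theorem lemma2p3 (P dP : R -> R) (a thetabar m : R) :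
  P_hyps P dP -> 0 < a -> 0 < thetabar -> 1 <= m ->
  (* case F(x) = |x^h|^2, G(x) = -x^3 *)
  (forall rho : R -> R -> R -> R -> R,
     (forall eps x1 x2 x3, 0 < eps <= 1 -> in_Omega x1 x2 x3 ->
        0 < rho eps x1 x2 x3 /\
        Pi P a thetabar (rho eps x1 x2 x3)
          = Rpower eps (2 * (m - 1)) * (x1 ^ 2 + x2 ^ 2) + Rpower eps m * (- x3)) ->
     forall l, 0 < l -> exists C, 1 < C /\
       forall eps x1 x2 x3, 0 < eps <= 1 -> in_Omega x1 x2 x3 ->
         sqrt (x1 ^ 2 + x2 ^ 2) <= l -> rho eps x1 x2 x3 <= C) /\
  (* case F = 0 *)
  (forall rho : R -> R -> R -> R -> R,
     (forall eps x1 x2 x3, 0 < eps <= 1 -> in_Omega x1 x2 x3 ->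
        0 < rho eps x1 x2 x3 /\
        Pi P a thetabar (rho eps x1 x2 x3) = Rpower eps m * (- x3)) ->
     exists C, 1 < C /\
       forall eps x1 x2 x3, 0 < eps <= 1 -> in_Omega x1 x2 x3 ->
         Rabs (rho eps x1 x2 x3) <= C).
Proof.
  intros [HP [_ [HdP [_ [_ [_ [_ [HdP_pos [_ [Pinf [HPinf Hgrowth]]]]]]]]]]] _ Hth Hm.
  assert (HPi := is_lim_Pi_p_infty P dP a thetabar Hth HP HdP
                   (fun Z HZ => Rlt_le _ _ (HdP_pos Z (Rlt_le _ _ HZ)))
                   (is_lim_div_p_infty P (5/3) Pinf ltac:(lra) HPinf Hgrowth)).
  split.
  - intros rho Hrho l Hl.
    destruct (is_lim_p_infty_sublevel _ HPi (l ^ 2)) as [C [HC Hsub]].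
    exists C; split; [exact HC |]; intros eps x1 x2 x3 Heps Hx Hxl.
    apply Hsub; destruct (Hrho eps x1 x2 x3 Heps Hx) as [_ ->].
    exact (source_le_sqr_radius eps m l x1 x2 x3 Heps Hm (proj1 Hx) Hxl).
  - intros rho Hrho.
    destruct (is_lim_p_infty_sublevel _ HPi 0) as [C [HC Hsub]].
    exists C; split; [exact HC |]; intros eps x1 x2 x3 Heps Hx.
    destruct (Hrho eps x1 x2 x3 Heps Hx) as [Hrho_pos HPi_eq].
    rewrite Rabs_pos_eq by lra.
    apply Hsub; rewrite HPi_eq.
    pose proof (exp_pos (m * ln eps)).
    unfold in_Omega, Rpower in *; nra.
Qed.
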